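(* If the system $\dot{z}(t) = A_{-1}\dot{z}(t-1)+L z_t+Bu$, $t\ge 0$, is exactly controllable at time $T$, then for any matrix $P\in\mathbb{C}^{r\times n}$ the perturbed system $$\dot z(t) = (A_{-1}+BP)\dot z(t-1) + L z_t + Bu$$ is exactly controllable at the same time $T$.
   Context: Consider the neutral type time-delay system $\dot{z}(t) = A_{-1}\dot{z}(t-1)+L z_t+Bu$, $t\ge 0$, where $A_{-1}\in\mathbb{R}^{n\times n}$, $B\in\mathbb{R}^{n\times r}$ are constant matrices, $z_t:[-1,0]\to\mathbb{C}^n$ is the history $z_t(s)=z(t+s)$, and the delay operator is $L f=\int_{-1}^0 A_2(\theta)\frac{\mathrm{d}}{\mathrm{d}\theta}f(\theta)\,\mathrm{d}\theta+\int_{-1}^0 A_3(\theta)f(\theta)\,\mathrm{d}\theta$, with $A_2,A_3$ $n\times n$ matrices whose entries belong to $L_2([-1,0],\mathbb{C})$. The system is said to be exactly controllable at time $T$ if for every $f\in H^1(T-1,T;\mathbb{C}^n)$ there exists a control $u\in L_2(0,T;\mathbb{C}^r)$ such that the solution with zero initial condition $z(t)=0$, $t\in[-1,0]$, satisfies $z(t)=f(t)$ for $t\in[T-1,T]$ (equivalently, the reachability set from $0$ at time $T$ of the associated operator model on $M_2=\mathbb{C}^n\times L_2(-1,0;\mathbb{C}^n)$ equals the domain $\mathcal{D}(\mathcal{A})$ of the system operator). *)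

From HB Require Import structures.
From mathcomp Require Import all_boot all_order all_algebra.
From mathcomp Require Import all_classical all_reals all_analysis.
From mathcomp.real_closed Require Import complex.

Set Implicit Arguments.
Unset Strict Implicit.
Unset Printing Implicit Defensive.

Import Order.TTheory GRing.Theory Num.Theory.
Local Open Scope classical_set_scope.
Local Open Scope ring_scope.

Section Defs.
Variable R : realType.
Local Notation C := R[i].
Local Notation mu := (@lebesgue_measure R).

Definition cint (D : set R) (f : R -> C) : C :=
  Complex (Rintegral mu D (fun x => complex.Re (f x))) (Rintegral mu D (fun x => complex.Im (f x))).

Definition L2c (a b : R) (f : R -> C) : Prop :=
  [/\ measurable_fun `[a, b] (fun x => complex.Re (f x)),
      measurable_fun `[a, b] (fun x => complex.Im (f x)) &
      (\int[mu]_(x in `[a, b]) ((complex.Re (f x)) ^+ 2 + (complex.Im (f x)) ^+ 2)%:E < +oo)%E].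

Definition L2v (m : nat) (a b : R) (f : R -> 'cV[C]_m) : Prop :=
  forall i : 'I_m, L2c a b (fun x => f x i 0).

Definition cintv (m : nat) (D : set R) (f : R -> 'cV[C]_m) : 'cV[C]_m :=
  \col_i cint D (fun x => f x i 0).

Definition H1v (m : nat) (a b : R) (f : R -> 'cV[C]_m) : Prop :=
  exists g : R -> 'cV[C]_m, L2v a b g /\
    forall t, a <= t <= b -> f t = f a + cintv `[a, t] g.

(* L z_t = int_{-1}^0 A2(th) zdot(t+th) dth + int_{-1}^0 A3(th) z(t+th) dth,
   where w is the derivative of z *)
Definition delayL (n : nat) (A2 A3 : 'I_n -> 'I_n -> R -> C)
    (z w : R -> 'cV[C]_n) (t : R) : 'cV[C]_n :=
  \col_i \sum_j (cint `[-1, 0] (fun th => A2 i j th * w (t + th) j 0)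
               + cint `[-1, 0] (fun th => A3 i j th * z (t + th) j 0)).

(* z is the (H^1) solution on [-1,T] of
     zdot(t) = Am1 zdot(t-1) + L z_t + B u(t),  t in [0,T],
   with zero initial condition z = 0 on [-1,0] *)
Definition is_solution (n r : nat) (Am1 : 'M[C]_n) (B : 'M[C]_(n, r))
    (A2 A3 : 'I_n -> 'I_n -> R -> C) (T : R)
    (u : R -> 'cV[C]_r) (z : R -> 'cV[C]_n) : Prop :=
  exists w : R -> 'cV[C]_n,
    [/\ L2v (-1) T w,
        (forall t, -1 <= t <= T -> z t = cintv `[-1, t] w),
        (forall t, -1 <= t <= 0 -> z t = 0) &
        {ae mu, forall t, 0 <= t <= T ->
            w t = Am1 *m w (t - 1) + delayL A2 A3 z w t + B *m u t}].

Definition exactly_controllable (n r : nat) (Am1 : 'M[C]_n) (B : 'M[C]_(n, r))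
    (A2 A3 : 'I_n -> 'I_n -> R -> C) (T : R) : Prop :=
  forall f : R -> 'cV[C]_n, H1v (T - 1) T f ->
    exists u : R -> 'cV[C]_r, L2v 0 T u /\
      exists z : R -> 'cV[C]_n, is_solution Am1 B A2 A3 T u z /\
        forall t, T - 1 <= t <= T -> z t = f t.

End Defs.

Definition cmx (R : realType) (m k : nat) (M : 'M[R]_(m, k)) : 'M[R[i]]_(m, k) :=
  map_mx (fun x => Complex x 0) M.

(** The perturbation [B P zdot(t-1)] lies in the range of [B], so it can be
    absorbed into the control: if [u] steers the original system along [z],
    with [w = zdot], then the feedback control [u(t) - P w(t-1)] steers the
    perturbed system along the same trajectory [z]. It remains to see that this
    control is again in [L_2(0,T)], which holds because [w] is in [L_2(-1,T)]
    and [L_2] is stable under sums, constant matrices and translations. *)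

From HB Require Import structures.
From mathcomp Require Import all_boot all_order all_algebra.
From mathcomp Require Import all_classical all_reals all_analysis measurable_realfun.
From mathcomp.real_closed Require Import complex.
From mathcomp Require Import lra.

Set Implicit Arguments.
Unset Strict Implicit.
Unset Printing Implicit Defensive.

Import Order.TTheory GRing.Theory Num.Theory.
Local Open Scope classical_set_scope.
Local Open Scope ring_scope.

Section L2_real.
Variable R : realType.
Local Notation mu := (@lebesgue_measure R).

Definition L2r (a b : R) (h : R -> R) : Prop :=
  measurable_fun `[a, b] h /\ (\int[mu]_(x in `[a, b]) (h x ^+ 2)%:E < +oo)%E.

Lemma measurable_EFin_sqr (D : set R) (h : R -> R) : measurable_fun D h ->
  measurable_fun D (fun x => (h x ^+ 2)%:E).
Proof. by move=> mh; apply/measurable_EFinP; exact: measurable_funX. Qed.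

Lemma L2r_ext (a b : R) (h g : R -> R) : h =1 g -> L2r a b h -> L2r a b g.
Proof. by move=> /funext ->. Qed.

Lemma EFin_sqr_ge0 (x : R) : (0 <= (x ^+ 2)%:E)%E.
Proof. by rewrite lee_fin sqr_ge0. Qed.

Lemma L2rD (a b : R) (h g : R -> R) :
  L2r a b h -> L2r a b g -> L2r a b (fun x => h x + g x).
Proof.
move=> [mh ih] [mg ig]; split; first exact: measurable_funD.
have mhg : measurable_fun `[a, b] (fun x => (h x ^+ 2)%:E + (g x ^+ 2)%:E)%E.
  by apply: emeasurable_funD; exact: measurable_EFin_sqr.
(* (h + g)^2 <= 2 (h^2 + g^2) *)
apply: (le_lt_trans (y := (\int[mu]_(x in `[a, b]) ((h x ^+ 2)%:E + (g x ^+ 2)%:E)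
   + \int[mu]_(x in `[a, b]) ((h x ^+ 2)%:E + (g x ^+ 2)%:E))%E)).
  rewrite -ge0_integralD //; last 2 first.
  - by move=> *; apply: adde_ge0; exact: EFin_sqr_ge0.
  - by move=> *; apply: adde_ge0; exact: EFin_sqr_ge0.
  apply: ge0_le_integral => //.
  - by move=> *; exact: EFin_sqr_ge0.
  - by apply: measurable_EFin_sqr; exact: measurable_funD.
  - exact: emeasurable_funD.
  move=> x _; rewrite -!EFinD lee_fin.
  by have := sqr_ge0 (h x - g x); rewrite sqrrB sqrrD; lra.
have ihg : (\int[mu]_(x in `[a, b]) ((h x ^+ 2)%:E + (g x ^+ 2)%:E) < +oo)%E.
  rewrite ge0_integralD //; try by move=> *; exact: EFin_sqr_ge0.
  - exact: lte_add_pinfty.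
  - exact: measurable_EFin_sqr.
  - exact: measurable_EFin_sqr.
exact: lte_add_pinfty.
Qed.

Lemma L2rMl (a b c : R) (h : R -> R) : L2r a b h -> L2r a b (fun x => c * h x).
Proof.
move=> [mh ih]; split; first exact: measurable_funM.
under eq_integral do rewrite exprMn EFinM.
rewrite ge0_integralZl //.
- by apply: lte_mul_pinfty => //; exact: EFin_sqr_ge0.
- exact: measurable_EFin_sqr.
- by move=> *; exact: EFin_sqr_ge0.
- exact: EFin_sqr_ge0.
Qed.

Lemma L2r_subitv (a b a' b' : R) (h : R -> R) :
  a <= a' -> b' <= b -> L2r a b h -> L2r a' b' h.
Proof.
move=> aa' b'b [mh ih].
have sub : `[a', b'] `<=` (`[a, b] : set R).
  by move=> x /=; rewrite !in_itv /= => /andP[? ?]; apply/andP; split; lra.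
split; first exact: measurable_funS mh.
apply: le_lt_trans ih; apply: ge0_subset_integral => //.
- exact: measurable_EFin_sqr.
- by move=> *; exact: EFin_sqr_ge0.
Qed.

Lemma measurable_addr (c : R) : measurable_fun setT (fun x : R => x + c).
Proof. by apply: measurable_funD => //; exact: measurable_cst. Qed.

Lemma lebesgue_measureD (c : R) (A : set R) : measurable A ->
  pushforward mu ((fun x : R => x + c) : R -> measurableTypeR R) A = mu A.
Proof.
move=> mA; apply/esym/lebesgue_measure_unique => //=; first exact: measurable_addr.
move=> _ _ [[a b]] _ <-; rewrite /pushforward.
have -> : (fun x : R => x + c) @^-1` `]a, b] = `]a - c, b - c]%classic.
  by apply/seteqP; split => x /=; rewrite !in_itv /= lerBrDr ltrBlDr.
rewrite !lebesgue_measure_itv /= !lte_fin ltrD2r -!EFinD.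
by rewrite opprB addrA subrK addrC.
Qed.

Lemma L2r_shift (a b c : R) (h : R -> R) :
  L2r a b h -> L2r (a + c) (b + c) (fun t => h (t - c)).
Proof.
move=> [mh ih].
have shift_itv : (fun t : R => t - c) @^-1` `[a, b] = `[a + c, b + c]%classic.
  by apply/seteqP; split => x /=; rewrite !in_itv /= lerBrDr lerBlDr.
have mshift : measurable_fun setT (fun t : R => t - c) := measurable_addr (- c).
split.
  have sub : (fun t : R => t - c) @` `[a + c, b + c] `<=` `[a, b].
    by rewrite -shift_itv => _ [t + <-].
  exact: measurable_comp (measurable_itv _) sub mh (measurable_funS _ _ mshift).
suff -> : (\int[mu]_(x in `[(a + c)%R, (b + c)%R]) (h (x - c) ^+ 2)%:E =
           \int[mu]_(x in `[a, b]) (h x ^+ 2)%:E)%E by [].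
pose shift_mu := pushforward mu ((fun t : R => t - c)%R : R -> measurableTypeR R).
transitivity (\int[shift_mu]_(x in `[a, b]) (h x ^+ 2)%:E)%E.
  rewrite ge0_integral_pushforward //= ?shift_itv //.
  - exact: measurable_EFin_sqr.
  - by move=> *; exact: EFin_sqr_ge0.
apply: eq_measure_integral => // A mA _; exact: lebesgue_measureD.
Qed.

End L2_real.

Section L2_complex.
Variable R : realType.
Local Notation C := R[i].

Lemma L2cP (a b : R) (f : R -> C) : L2c a b f <->
  L2r a b (fun x => complex.Re (f x)) /\ L2r a b (fun x => complex.Im (f x)).
Proof.
split.
- case=> mr mi fin.
  have mE : measurable_fun `[a, b]
      (fun x => ((complex.Re (f x)) ^+ 2 + (complex.Im (f x)) ^+ 2)%:E).
    by apply/measurable_EFinP; apply: measurable_funD; exact: measurable_funX.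
  split; split => //; apply: le_lt_trans fin; apply: ge0_le_integral => //;
    try (by move=> *; exact: EFin_sqr_ge0); try exact: measurable_EFin_sqr.
  + by move=> x _; rewrite lee_fin lerDl sqr_ge0.
  + by move=> x _; rewrite lee_fin lerDr sqr_ge0.
- case=> [[mr ir] [mi ii]]; split => //.
  under eq_integral do rewrite EFinD.
  rewrite ge0_integralD //; first exact: lte_add_pinfty.
  all: by [move=> *; exact: EFin_sqr_ge0 | exact: measurable_EFin_sqr].
Qed.

Lemma L2cD (a b : R) (f g : R -> C) :
  L2c a b f -> L2c a b g -> L2c a b (fun x => f x + g x).
Proof.
move=> /L2cP[fr fi] /L2cP[gr gi]; apply/L2cP.
split; [apply: L2r_ext (L2rD fr gr) | apply: L2r_ext (L2rD fi gi)].
all: by move=> x; case: (f x); case: (g x).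
Qed.

Lemma L2cMl (a b : R) (c : C) (f : R -> C) : L2c a b f -> L2c a b (fun x => c * f x).
Proof.
move=> /L2cP[fr fi]; apply/L2cP; split.
- apply: L2r_ext (L2rD (L2rMl (complex.Re c) fr) (L2rMl (- complex.Im c) fi)) => x.
  by case: c => ? ?; case: (f x) => ? ? /=; rewrite mulNr.
- apply: L2r_ext (L2rD (L2rMl (complex.Re c) fi) (L2rMl (complex.Im c) fr)) => x.
  by case: c => ? ?; case: (f x).
Qed.

Lemma L2c0 (a b : R) : L2c a b (fun _ => 0).
Proof.
apply/L2cP; split; split => /=; try exact: measurable_cst;
  (under eq_integral do rewrite expr0n /=); rewrite integral0 //.
Qed.

Lemma L2c_sum (a b : R) (I : Type) (s : seq I) (F : I -> R -> C) :
  (forall j, L2c a b (F j)) -> L2c a b (fun x => \sum_(j <- s) F j x).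
Proof.
move=> HF; elim: s => [|j s IH].
  by under eq_fun do rewrite big_nil; exact: L2c0.
by under eq_fun do rewrite big_cons; exact: L2cD.
Qed.

Lemma L2c_subitv (a b a' b' : R) (f : R -> C) :
  a <= a' -> b' <= b -> L2c a b f -> L2c a' b' f.
Proof.
by move=> aa' b'b /L2cP[fr fi]; apply/L2cP; split; exact: (L2r_subitv aa' b'b).
Qed.

Lemma L2c_shift (a b c : R) (f : R -> C) :
  L2c a b f -> L2c (a + c) (b + c) (fun t => f (t - c)).
Proof.
by move=> /L2cP[fr fi]; apply/L2cP; split; exact: (L2r_shift _ (h := fun x => _ (f x))).
Qed.

Lemma L2vD (m : nat) (a b : R) (f g : R -> 'cV[C]_m) :
  L2v a b f -> L2v a b g -> L2v a b (fun x => f x + g x).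
Proof. by move=> Lf Lg i; under eq_fun do rewrite mxE; exact: L2cD. Qed.

Lemma L2v_mulmx (m k : nat) (a b : R) (M : 'M[C]_(k, m)) (f : R -> 'cV[C]_m) :
  L2v a b f -> L2v a b (fun x => M *m f x).
Proof.
move=> Lf i; under eq_fun do rewrite mxE.
by apply: L2c_sum => j; exact: L2cMl.
Qed.

Lemma L2v_subitv (m : nat) (a b a' b' : R) (f : R -> 'cV[C]_m) :
  a <= a' -> b' <= b -> L2v a b f -> L2v a' b' f.
Proof. by move=> aa' b'b Lf i; exact: L2c_subitv (Lf i). Qed.

Lemma L2v_shift (m : nat) (a b c : R) (f : R -> 'cV[C]_m) :
  L2v a b f -> L2v (a + c) (b + c) (fun t => f (t - c)).
Proof. by move=> Lf i; exact: (L2c_shift _ (Lf i)). Qed.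

Lemma L2v_delayed_feedback (m k : nat) (T : R) (P : 'M[C]_(k, m))
    (u : R -> 'cV[C]_k) (w : R -> 'cV[C]_m) :
  L2v 0 T u -> L2v (-1) T w -> L2v 0 T (fun t => u t - P *m w (t - 1)).
Proof.
move=> Lu Lw; under eq_fun do rewrite -mulNmx.
apply: L2vD Lu (L2v_mulmx _ _); apply: (@L2v_subitv _ (-1 + 1) (T + 1)).
- by rewrite addNr.
- by rewrite lerDl.
- exact: L2v_shift.
Qed.

End L2_complex.

(* The delayed feedback [u(t) - P w(t-1)] turns [(Am1 + B P) w(t-1) + B u(t)]
   back into [Am1 w(t-1) + B u(t)]. *)
Lemma is_solution_feedback (R : realType) (n r : nat) (Am1 : 'M[R[i]]_n)
    (B : 'M[R[i]]_(n, r)) (A2 A3 : 'I_n -> 'I_n -> R -> R[i]) (T : R)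
    (P : 'M[R[i]]_(r, n)) (u : R -> 'cV[R[i]]_r) (z : R -> 'cV[R[i]]_n) :
  L2v 0 T u -> is_solution Am1 B A2 A3 T u z ->
  exists2 v, L2v 0 T v & is_solution (Am1 + B *m P) B A2 A3 T v z.
Proof.
move=> Lu [w [Lw zw z0 ode]].
exists (fun t => u t - P *m w (t - 1)); first exact: L2v_delayed_feedback.
exists w; split => //.
apply: (filterS (F := almost_everywhere _)) ode => t ode_t /ode_t ->.
rewrite mulmxDl mulmxBr mulmxA -!addrA; congr (_ + _).
by rewrite addrCA; congr (_ + _); rewrite addrC subrK.
Qed.

Theorem lemma1 (R : realType) (n r : nat) (Am1 : 'M[R]_n) (B : 'M[R]_(n, r))
    (A2 A3 : 'I_n -> 'I_n -> R -> R[i]) (T : R) (P : 'M[R[i]]_(r, n)) :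
  (forall i j, L2c (-1) 0 (A2 i j)) ->
  (forall i j, L2c (-1) 0 (A3 i j)) ->
  exactly_controllable (cmx Am1) (cmx B) A2 A3 T ->
  exactly_controllable (cmx Am1 + cmx B *m P) (cmx B) A2 A3 T.
Proof.
move=> _ _ ctrl f Hf.
have [u [Lu [z [sol_z zf]]]] := ctrl f Hf.
have [v Lv sol_v] := is_solution_feedback P Lu sol_z.
by exists v; split => //; exists z.
Qed.
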